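(* Let $\mathcal C\subseteq\mathbb R^{h\times p}$ be closed and convex with $W^\star\in\mathcal C$, and $\mathcal T$ its feasible ball. Let $U\in\mathcal C$ and suppose $\nabla\mathcal L(U)=(H_1+H_2+H_3)\,\mathrm{vec}(U-W^\star)$ where $H_1,H_2,H_3\in\mathbb R^{hp\times hp}$, $H_1$ symmetric with $0\preceq H_1\preceq\alpha I_{hp}$, $\|H_2+H_3\|\le\varepsilon$, and $\inf_{\mathbf v\in\mathcal T,\mathbf v\ne0}\mathbf v^TH_1\mathbf v/\|\mathbf v\|_2^2\ge\beta$, with $\beta\ge10\varepsilon$. Then $\hat U=\mathcal P_{\mathcal C}(U-\frac1\alpha\nabla\mathcal L(U))$ satisfies $\|\hat U-W^\star\|_F^2\le(1-\frac{\beta}{2\alpha})\|U-W^\star\|_F^2$.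
   Context: Matrices in $\mathbb R^{h\times p}$ are identified with vectors in $\mathbb R^{hp}$ (vec stacks rows). $\mathcal P_{\mathcal C}$ is Frobenius projection. Feasible ball: $\mathcal T=\mathcal B^{h\times p}\cap\mathrm{cl}\{\alpha U: W^\star+U\in\mathcal C,\alpha\ge0\}$ with $\mathcal B^{h\times p}$ the unit Frobenius ball. $\|\cdot\|$ is the spectral norm. *)

From Stdlib Require Import Reals.
From mathcomp Require Import all_boot.
Set Implicit Arguments. Unset Strict Implicit. Unset Printing Implicit Defensive.
Open Scope R_scope.

Definition Rvec (n : nat) := 'I_n -> R.
Definition Rsqmat (n : nat) := 'I_n -> 'I_n -> R.
Definition Rmat (h p : nat) := 'I_h -> 'I_p -> R.

Definition rsum n (F : 'I_n -> R) : R := \big[Rplus/R0]_(i in 'I_n) F i.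

Definition dotv n (u v : Rvec n) : R := rsum (fun i => u i * v i).
Definition norm2 n (v : Rvec n) : R := sqrt (dotv v v).
Definition vsub n (u v : Rvec n) : Rvec n := fun i => u i - v i.
Definition vscale n (a : R) (v : Rvec n) : Rvec n := fun i => a * v i.
Definition vzero n : Rvec n := fun _ => 0.

Definition mulmv n (A : Rsqmat n) (v : Rvec n) : Rvec n :=
  fun i => rsum (fun j => A i j * v j).
Definition madd n (A B : Rsqmat n) : Rsqmat n := fun i j => A i j + B i j.

Definition quad n (A : Rsqmat n) (v : Rvec n) : R := dotv v (mulmv A v).

Definition symm_mat n (A : Rsqmat n) : Prop := forall i j, A i j = A j i.
Definition psd n (A : Rsqmat n) : Prop := forall v : Rvec n, 0 <= quad A v.
Definition loewner_le_scalar n (A : Rsqmat n) (a : R) : Prop :=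
  forall v : Rvec n, quad A v <= a * dotv v v.

Definition spec_norm_le n (A : Rsqmat n) (e : R) : Prop :=
  forall v : Rvec n, norm2 v <= 1 -> norm2 (mulmv A v) <= e.

Definition msub h p (X Y : Rmat h p) : Rmat h p := fun i j => X i j - Y i j.
Definition madd_hp h p (X Y : Rmat h p) : Rmat h p := fun i j => X i j + Y i j.
Definition mscale h p (a : R) (X : Rmat h p) : Rmat h p := fun i j => a * X i j.
Definition frob h p (X : Rmat h p) : R :=
  sqrt (rsum (fun i => rsum (fun j => X i j ^ 2))).

(* vec: stacks rows, (vec X)_(i*p + j) = X i j *)
Lemma vec_row_lt h p (k : 'I_(h * p)) : (k %/ p < h)%N.
Proof.
  have Hp : (0 < p)%N.
    case: p k => [|p] k //; by case: k => m; rewrite muln0.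
  by rewrite ltn_divLR // mulnC ltn_ord.
Qed.
Lemma vec_col_lt h p (k : 'I_(h * p)) : (k %% p < p)%N.
Proof.
  have Hp : (0 < p)%N.
    case: p k => [|p] k //; by case: k => m; rewrite muln0.
  by rewrite ltn_pmod.
Qed.
Definition vec h p (X : Rmat h p) : Rvec (h * p) :=
  fun k => X (Ordinal (vec_row_lt k)) (Ordinal (vec_col_lt k)).

Definition closed_mset h p (C : Rmat h p -> Prop) : Prop :=
  forall X, (forall eps, 0 < eps -> exists Y, C Y /\ frob (msub X Y) < eps) -> C X.
Definition convex_mset h p (C : Rmat h p -> Prop) : Prop :=
  forall X Y t, C X -> C Y -> 0 <= t <= 1 ->
    C (madd_hp (mscale t X) (mscale (1 - t) Y)).

Definition closure_v n (S : Rvec n -> Prop) : Rvec n -> Prop :=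
  fun v => forall eps, 0 < eps -> exists y, S y /\ norm2 (vsub v y) < eps.

Definition feasible_ball h p (C : Rmat h p -> Prop) (Wstar : Rmat h p)
  : Rvec (h * p) -> Prop :=
  fun v => norm2 v <= 1 /\
    closure_v (fun y => exists (a : R) (V : Rmat h p),
                 0 <= a /\ C (madd_hp Wstar V) /\ y = vscale a (vec V)) v.

Definition is_proj h p (C : Rmat h p -> Prop) (X Y : Rmat h p) : Prop :=
  C Y /\ forall Z, C Z -> frob (msub X Y) <= frob (msub X Z).

(* Write d = vec(U - Wstar) and P = vec(Uhat - Wstar).  Since Wstar lies in C,
   the projection inequality gives |P|^2 <= <P, d - grad L(U) / alpha>.  Both d
   and P lie in the cone generated by C - Wstar, where H1 has curvature at least
   beta; applying alpha I - H1 >= 0 to |d| P - |P| d bounds the H1 part of the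
   gradient term by (alpha - beta) |d| |P|, and Cauchy-Schwarz bounds the
   H2 + H3 part by eps |d| |P|.  Hence alpha |P| <= (alpha - beta + eps) |d|,
   and beta >= 10 eps makes (1 - (beta - eps) / alpha)^2 <= 1 - beta / (2 alpha). *)
From HB Require Import structures.
From Stdlib Require Import Reals Lra Psatz FunctionalExtensionality.
From mathcomp Require Import all_boot.
Open Scope R_scope.
Set Implicit Arguments. Unset Strict Implicit.

HB.instance Definition _ :=
  Monoid.isComLaw.Build R R0 Rplus (fun a b c => esym (Rplus_assoc a b c)) Rplus_comm Rplus_0_l.

Lemma rsum_ext n (f g : 'I_n -> R) : (forall i, f i = g i) -> rsum f = rsum g.
Proof. by move=> fg; apply: eq_bigr => i _. Qed.

Lemma rsum_add n (f g : 'I_n -> R) : rsum (fun i => f i + g i) = rsum f + rsum g.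
Proof. exact: big_split. Qed.

Lemma rsum_scale n c (f : 'I_n -> R) : rsum (fun i => c * f i) = c * rsum f.
Proof.
apply: (big_rec2 (fun s t => s = c * t)); first by ring.
by move=> i s t _ ->; ring.
Qed.

Lemma rsum_sub n (f g : 'I_n -> R) : rsum (fun i => f i - g i) = rsum f - rsum g.
Proof.
rewrite (@rsum_ext _ _ (fun i => f i + -1 * g i)) => [|i]; last by ring.
by rewrite rsum_add rsum_scale; ring.
Qed.

Lemma rsum0 n : rsum (fun _ : 'I_n => 0) = 0.
Proof. by apply: big1. Qed.

Lemma rsum_exch n (F : 'I_n -> 'I_n -> R) :
  rsum (fun i => rsum (fun j => F i j)) = rsum (fun j => rsum (fun i => F i j)).
Proof. exact: exchange_big. Qed.

Lemma rsum_ge_term n (f : 'I_n -> R) k : (forall i, 0 <= f i) -> f k <= rsum f.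
Proof.
move=> f_ge0; rewrite /rsum (bigD1 k) //=.
set rest := \big[_/_]_(i | _) _.
suff : 0 <= rest by lra.
by apply: (big_ind (fun x => 0 <= x)) => [|x y|i _]; [lra|lra|apply: f_ge0].
Qed.

Lemma dotvC n (u v : Rvec n) : dotv u v = dotv v u.
Proof. by apply: rsum_ext => i; ring. Qed.

Lemma dotv_subl n (u v w : Rvec n) : dotv (vsub u v) w = dotv u w - dotv v w.
Proof. by rewrite /dotv -rsum_sub; apply: rsum_ext => i; rewrite /vsub; ring. Qed.

Lemma dotv_subr n (u v w : Rvec n) : dotv w (vsub u v) = dotv w u - dotv w v.
Proof. by rewrite dotvC dotv_subl (dotvC u) (dotvC v). Qed.

Lemma dotv_scalel n c (u w : Rvec n) : dotv (vscale c u) w = c * dotv u w.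
Proof. by rewrite /dotv -rsum_scale; apply: rsum_ext => i; rewrite /vscale; ring. Qed.

Lemma dotv_scaler n c (u w : Rvec n) : dotv w (vscale c u) = c * dotv w u.
Proof. by rewrite dotvC dotv_scalel dotvC. Qed.

Lemma dotv0r n (u : Rvec n) : dotv u (@vzero n) = 0.
Proof. by rewrite /dotv -(rsum0 n); apply: rsum_ext => i; rewrite /vzero; ring. Qed.

Lemma dotv0l n (u : Rvec n) : dotv (@vzero n) u = 0.
Proof. by rewrite dotvC dotv0r. Qed.

Lemma dotv_ge0 n (v : Rvec n) : 0 <= dotv v v.
Proof.
by apply: (big_ind (fun x => 0 <= x)) => [|x y|i _]; [lra|lra|nra].
Qed.

Lemma dotv_sub_scale n a b (x y : Rvec n) :
  dotv (vsub (vscale a x) (vscale b y)) (vsub (vscale a x) (vscale b y)) =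
  a ^ 2 * dotv x x - 2 * a * b * dotv x y + b ^ 2 * dotv y y.
Proof.
by rewrite !dotv_subl !dotv_subr !dotv_scalel !dotv_scaler (dotvC y x); ring.
Qed.

Lemma norm2_ge0 n (v : Rvec n) : 0 <= norm2 v.
Proof. exact: sqrt_pos. Qed.

Lemma norm2_sq n (v : Rvec n) : norm2 v ^ 2 = dotv v v.
Proof. exact/pow2_sqrt/dotv_ge0. Qed.

Lemma norm2_eq0 n (v : Rvec n) : norm2 v = 0 -> v = @vzero n.
Proof.
move=> v0; apply: functional_extensionality => i.
have vv0 : dotv v v = 0 by rewrite -norm2_sq v0; ring.
have : v i * v i <= dotv v v by apply: (@rsum_ge_term _ (fun j => v j * v j)) => j; nra.
rewrite /vzero; nra.
Qed.

Lemma norm2_vzero n : norm2 (@vzero n) = 0.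
Proof. by rewrite /norm2 dotv0r sqrt_0. Qed.

Lemma norm2_scale n c (v : Rvec n) : norm2 (vscale c v) = Rabs c * norm2 v.
Proof.
rewrite /norm2 dotv_scalel dotv_scaler -Rmult_assoc sqrt_mult; last exact: dotv_ge0.
  by rewrite -(sqrt_Rsqr_abs c).
by nra.
Qed.

Lemma norm2_normalize n (v : Rvec n) :
  0 < norm2 v -> norm2 (vscale (/ norm2 v) v) = 1.
Proof.
move=> v_gt0; rewrite norm2_scale Rabs_right; first by field; lra.
by apply/Rle_ge/Rlt_le/Rinv_0_lt_compat.
Qed.

Lemma dotv_le_of_norm2_le n (u v : Rvec n) :
  norm2 u <= norm2 v -> dotv u u <= dotv v v.
Proof. by move=> uv; rewrite -!norm2_sq; apply: pow_incr; split; first exact: norm2_ge0. Qed.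

(* Expand |(|v|) u -+ (|u|) v|^2 >= 0. *)
Lemma Rabs_dotv_le n (u v : Rvec n) : Rabs (dotv u v) <= norm2 u * norm2 v.
Proof.
have [u0|u_neq0] := Req_dec (norm2 u) 0.
  by rewrite u0 (norm2_eq0 u0) dotv0l Rabs_R0; lra.
have [v0|v_neq0] := Req_dec (norm2 v) 0.
  by rewrite v0 (norm2_eq0 v0) dotv0r Rabs_R0; lra.
have a_gt0 : 0 < norm2 u by have := norm2_ge0 u; lra.
have b_gt0 : 0 < norm2 v by have := norm2_ge0 v; lra.
set a := norm2 u in a_gt0 *; set b := norm2 v in b_gt0 *.
have uu : dotv u u = a ^ 2 by rewrite norm2_sq.
have vv : dotv v v = b ^ 2 by rewrite norm2_sq.
have := dotv_ge0 (vsub (vscale b u) (vscale a v)).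
have := dotv_ge0 (vsub (vscale b u) (vscale (- a) v)).
rewrite !dotv_sub_scale uu vv => ge0_plus ge0_minus.
have ab_gt0 : 0 < a * b by nra.
by apply: Rabs_le; split; nra.
Qed.

Lemma closure_v_self n (S : Rvec n -> Prop) (v : Rvec n) : S v -> closure_v S v.
Proof.
move=> Sv r r_gt0; exists v; split => //.
have -> : vsub v v = @vzero n.
  by apply: functional_extensionality => i; rewrite /vsub /vzero; ring.
by rewrite norm2_vzero.
Qed.

Lemma mulmv0 n (A : Rsqmat n) : mulmv A (@vzero n) = @vzero n.
Proof. by apply: functional_extensionality => i; apply: dotv0r. Qed.

Lemma mulmv_madd n (A B : Rsqmat n) v : mulmv (madd A B) v = fun i => mulmv A v i + mulmv B v i.
Proof.
by apply: functional_extensionality => i; rewrite -rsum_add; apply: rsum_ext => j; rewrite /madd; ring.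
Qed.

Lemma mulmv_scale n (A : Rsqmat n) c v : mulmv A (vscale c v) = vscale c (mulmv A v).
Proof. by apply: functional_extensionality => i; apply: dotv_scaler. Qed.

Lemma mulmv_sub n (A : Rsqmat n) u v : mulmv A (vsub u v) = vsub (mulmv A u) (mulmv A v).
Proof. by apply: functional_extensionality => i; apply: dotv_subr. Qed.

Lemma dotv_mulmv_symm n (A : Rsqmat n) u v :
  symm_mat A -> dotv u (mulmv A v) = dotv v (mulmv A u).
Proof.
move=> A_symm; rewrite /dotv /mulmv.
rewrite (@rsum_ext _ _ (fun i => rsum (fun j => u i * A i j * v j))) => [|i]; last first.
  by rewrite -rsum_scale; apply: rsum_ext => j; ring.
rewrite rsum_exch; apply: rsum_ext => j.
by rewrite -rsum_scale; apply: rsum_ext => i; rewrite (A_symm i j); ring.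
Qed.

Lemma quad_scale n (A : Rsqmat n) c v : quad A (vscale c v) = c ^ 2 * quad A v.
Proof. by rewrite /quad mulmv_scale dotv_scalel dotv_scaler; ring. Qed.

Lemma quad_sub_scale n (A : Rsqmat n) a b (x y : Rvec n) : symm_mat A ->
  quad A (vsub (vscale a x) (vscale b y)) =
  a ^ 2 * quad A x - 2 * a * b * dotv x (mulmv A y) + b ^ 2 * quad A y.
Proof.
move=> A_symm; rewrite /quad mulmv_sub !mulmv_scale.
by rewrite !dotv_subl !dotv_subr !dotv_scalel !dotv_scaler (dotv_mulmv_symm y x A_symm); ring.
Qed.

Lemma spec_norm_le_ge0 n (A : Rsqmat n) e : spec_norm_le A e -> 0 <= e.
Proof.
by move=> A_le; have := A_le (@vzero n); rewrite mulmv0 norm2_vzero; apply; lra.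
Qed.

Lemma spec_norm_le_mulmv n (A : Rsqmat n) e v :
  spec_norm_le A e -> norm2 (mulmv A v) <= e * norm2 v.
Proof.
move=> A_le; have [v0|v_neq0] := Req_dec (norm2 v) 0.
  by rewrite v0 (norm2_eq0 v0) mulmv0 norm2_vzero; lra.
have v_gt0 : 0 < norm2 v by have := norm2_ge0 v; lra.
have := A_le _ (Req_le _ _ (norm2_normalize v_gt0)).
rewrite mulmv_scale norm2_scale Rabs_right; last exact/Rle_ge/Rlt_le/Rinv_0_lt_compat.
move=> Av_le; have := Rmult_le_compat_l _ _ _ (norm2_ge0 v) Av_le.
by rewrite -Rmult_assoc Rinv_r // Rmult_1_l Rmult_comm.
Qed.

(* Apply alpha I - A >= 0 to |y| x - |x| y. *)
Lemma cross_term_le n (A : Rsqmat n) alpha beta (x y : Rvec n) :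
  symm_mat A -> loewner_le_scalar A alpha ->
  beta * dotv x x <= quad A x -> beta * dotv y y <= quad A y ->
  alpha * dotv x y - dotv x (mulmv A y) <= (alpha - beta) * norm2 x * norm2 y.
Proof.
move=> A_symm A_le curv_x curv_y.
have [x0|x_neq0] := Req_dec (norm2 x) 0.
  by rewrite x0 (norm2_eq0 x0) !dotv0l; lra.
have [y0|y_neq0] := Req_dec (norm2 y) 0.
  by rewrite y0 (norm2_eq0 y0) mulmv0 !dotv0r; lra.
have a_gt0 : 0 < norm2 x by have := norm2_ge0 x; lra.
have b_gt0 : 0 < norm2 y by have := norm2_ge0 y; lra.
set a := norm2 x in a_gt0 *; set b := norm2 y in b_gt0 *.
have xx : dotv x x = a ^ 2 by rewrite norm2_sq.
have yy : dotv y y = b ^ 2 by rewrite norm2_sq.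
have := A_le (vsub (vscale b x) (vscale a y)).
rewrite quad_sub_scale // dotv_sub_scale xx yy.
rewrite xx in curv_x; rewrite yy in curv_y.
have ab_gt0 : 0 < a * b by nra.
by nra.
Qed.

Lemma madd_hp_msub h p (W X : Rmat h p) : madd_hp W (msub X W) = X.
Proof.
apply: functional_extensionality => i; apply: functional_extensionality => j.
by rewrite /madd_hp /msub; ring.
Qed.

Lemma vec_index_lt h p (ij : 'I_h * 'I_p) : (ij.1 * p + ij.2 < h * p)%N.
Proof.
case: ij => [[i lt_ih] [j lt_jp]] /=.
apply: (@leq_trans (i.+1 * p)); first by rewrite mulSn addnC ltn_add2r.
by rewrite leq_mul2r lt_ih orbT.
Qed.

Definition vec_index h p (ij : 'I_h * 'I_p) : 'I_(h * p) := Ordinal (vec_index_lt ij).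
Definition unvec_index h p (k : 'I_(h * p)) : 'I_h * 'I_p :=
  (Ordinal (vec_row_lt k), Ordinal (vec_col_lt k)).

Lemma vec_indexK h p : cancel (@vec_index h p) (@unvec_index h p).
Proof.
case=> [[i lt_ih] [j lt_jp]].
have p_gt0 : (0 < p)%N by case: p j lt_jp {lt_ih}.
rewrite /unvec_index /vec_index; congr pair; apply: val_inj => /=.
- by rewrite divnMDl // divn_small // addn0.
- by rewrite modnMDl modn_small.
Qed.

Lemma unvec_indexK h p : cancel (@unvec_index h p) (@vec_index h p).
Proof. by move=> k; apply: val_inj => /=; rewrite -divn_eq. Qed.

Lemma vec_vec_index h p (X : Rmat h p) ij : vec X (vec_index ij) = X ij.1 ij.2.
Proof.
by rewrite /vec; have := vec_indexK ij; rewrite /unvec_index; case: ij => i j /= [-> ->].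
Qed.

Lemma frob_vec h p (X : Rmat h p) : frob X = norm2 (vec X).
Proof.
rewrite /frob /norm2 /dotv; congr sqrt.
rewrite /rsum pair_big /= (reindex (@vec_index h p)) /=; last first.
  by exists (@unvec_index h p) => k _; [apply: vec_indexK | apply: unvec_indexK].
by apply: eq_big => [ij|ij _] //; rewrite vec_vec_index /=; ring.
Qed.

Lemma nonpos_of_quadratic_lower_bound c q :
  0 <= q -> (forall t, 0 < t <= 1 -> 2 * t * c <= t ^ 2 * q) -> c <= 0.
Proof.
move=> q_ge0 bound; apply: Rnot_lt_le => c_gt0.
set t := c / (c + q).
have t_def : t * (c + q) = c by rewrite /t; field; lra.
have t_gt0 : 0 < t by apply: Rdiv_lt_0_compat; lra.
have t_le1 : t <= 1 by nra.
by have := bound t (conj t_gt0 t_le1); nra.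
Qed.

(* Comparing Y with the points t W + (1 - t) Y of C. *)
Lemma is_proj_dotv_le h p (C : Rmat h p -> Prop) X Y W :
  convex_mset C -> C W -> is_proj C X Y ->
  dotv (vec (msub Y W)) (vec (msub Y W)) <= dotv (vec (msub X W)) (vec (msub Y W)).
Proof.
move=> C_convex CW [CY Y_min].
set P := vec (msub Y W); set z := vec (msub X W).
suff : dotv (vsub z P) (vscale (-1) P) <= 0.
  by rewrite dotv_scaler dotv_subl; lra.
apply: (nonpos_of_quadratic_lower_bound (dotv_ge0 P)) => t t_bounds.
have := Y_min _ (C_convex _ _ t CW CY ltac:(lra)).
rewrite !frob_vec => /dotv_le_of_norm2_le.
have -> : vec (msub X (madd_hp (mscale t W) (mscale (1 - t) Y))) =
          vsub (vscale 1 (vsub z P)) (vscale t (vscale (-1) P)).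
  by apply: functional_extensionality => k; rewrite /z /P /vec /vsub /vscale /msub /madd_hp /mscale; ring.
have -> : vec (msub X Y) = vsub z P.
  by apply: functional_extensionality => k; rewrite /z /P /vec /vsub /msub; ring.
rewrite dotv_sub_scale !dotv_scalel !dotv_scaler.
by lra.
Qed.

(* The normalised vec V lies in the generated cone itself, hence in the feasible ball. *)
Lemma feasible_ball_curvature h p (C : Rmat h p -> Prop) Wstar (A : Rsqmat (h * p)) beta V :
  (forall v, feasible_ball C Wstar v -> v <> @vzero _ -> beta <= quad A v / (norm2 v ^ 2)) ->
  C (madd_hp Wstar V) -> beta * dotv (vec V) (vec V) <= quad A (vec V).
Proof.
move=> curv CV; set v := vec V.
have [v0|v_neq0] := Req_dec (norm2 v) 0.
  by rewrite (norm2_eq0 v0) /quad mulmv0 !dotv0r; lra.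
have v_gt0 : 0 < norm2 v by have := norm2_ge0 v; lra.
set y := vscale (/ norm2 v) v.
have y1 : norm2 y = 1 by apply: norm2_normalize.
have y_ball : feasible_ball C Wstar y.
  split; first lra.
  apply: closure_v_self; exists (/ norm2 v), V.
  by split; first exact/Rlt_le/Rinv_0_lt_compat.
have y_neq0 : y <> @vzero _ by move=> y0; move: y1; rewrite y0 norm2_vzero; lra.
have := curv _ y_ball y_neq0.
rewrite y1 /y quad_scale -norm2_sq pow1 Rdiv_1_r => le_quad.
have := Rmult_le_compat_l _ _ _ (pow2_ge_0 (norm2 v)) le_quad.
rewrite -Rmult_assoc -Rpow_mult_distr Rinv_r ?pow1 ?Rmult_1_l //; lra.
Qed.

Lemma contraction_of_bound a b alpha beta eps :
  0 <= a -> 0 <= b -> 0 < alpha -> 0 <= eps -> 10 * eps <= beta ->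
  beta * a ^ 2 <= alpha * a ^ 2 ->
  alpha * b ^ 2 <= (alpha - beta + eps) * a * b ->
  b ^ 2 <= (1 - beta / (2 * alpha)) * a ^ 2.
Proof.
move=> a_ge0 b_ge0 alpha_gt0 eps_ge0 eps_le curv_a bound.
have [a0|a_gt0] := Req_dec a 0.
  by rewrite a0 in bound *; nra.
have a_pos : 0 < a by lra.
have beta_le : beta <= alpha by apply: (Rmult_le_reg_r (a ^ 2)); [exact: pow_lt | lra].
have alpha_b : alpha * b <= (alpha - beta + eps) * a.
  have [b0|b_neq0] := Req_dec b 0; first by rewrite b0; nra.
  by nra.
have -> : (1 - beta / (2 * alpha)) * a ^ 2 = (alpha ^ 2 - alpha * beta / 2) * a ^ 2 / alpha ^ 2
  by field; lra.
apply: (Rmult_le_reg_r (alpha ^ 2)); first by nra.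
rewrite /Rdiv Rmult_assoc Rinv_l; last by nra.
have : (alpha * b) ^ 2 <= ((alpha - beta + eps) * a) ^ 2 by nra.
have : (alpha - beta + eps) ^ 2 <= (alpha - 9 / 10 * beta) ^ 2 by nra.
by nra.
Qed.

Theorem mainTheorem9 (h p : nat) (C : Rmat h p -> Prop) (Wstar U G Uhat : Rmat h p)
  (H1 H2 H3 : Rsqmat (h * p)) (alpha beta eps : R) :
  closed_mset C -> convex_mset C -> C Wstar ->
  C U ->
  (* G = grad L(U) = (H1 + H2 + H3) vec(U - W* ) *)
  (forall k, vec G k = mulmv (madd (madd H1 H2) H3) (vec (msub U Wstar)) k) ->
  0 < alpha ->
  symm_mat H1 -> psd H1 -> loewner_le_scalar H1 alpha ->
  spec_norm_le (madd H2 H3) eps ->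
  (forall v, feasible_ball C Wstar v -> v <> @vzero _ ->
     beta <= quad H1 v / (norm2 v ^ 2)) ->
  10 * eps <= beta ->
  is_proj C (msub U (mscale (/ alpha) G)) Uhat ->
  frob (msub Uhat Wstar) ^ 2 <= (1 - beta / (2 * alpha)) * frob (msub U Wstar) ^ 2.
Proof.
move=> _ C_convex CWstar CU grad alpha_gt0 H1_symm _ H1_le H23_le curv eps_le proj.
rewrite !frob_vec.
set d := vec (msub U Wstar); set P := vec (msub Uhat Wstar).
set e := mulmv (madd H2 H3) d.
have grad_step : vec (msub (msub U (mscale (/ alpha) G)) Wstar) =
            vsub (vsub d (vscale (/ alpha) (mulmv H1 d))) (vscale (/ alpha) e).
  apply: functional_extensionality => k.
  have := grad k; rewrite /e !mulmv_madd /d /vec /vsub /vscale /msub /mscale => ->; ring.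
have proj_le := is_proj_dotv_le C_convex CWstar proj; rewrite -/P grad_step in proj_le.
have curv_d : beta * dotv d d <= quad H1 d.
  by apply: (feasible_ball_curvature curv); rewrite madd_hp_msub.
have curv_P : beta * dotv P P <= quad H1 P.
  by apply: (feasible_ball_curvature curv); rewrite madd_hp_msub; case: proj.
clearbody d P.
rewrite !dotv_subl !dotv_scalel (dotvC d) (dotvC (mulmv H1 d)) (dotvC e) in proj_le.
have cross := cross_term_le H1_symm H1_le curv_P curv_d.
have perturbation_le : - dotv P e <= eps * norm2 d * norm2 P.
  have e_le : norm2 e <= eps * norm2 d := spec_norm_le_mulmv d H23_le.
  have := Rle_abs (- dotv P e); rewrite Rabs_Ropp.
  have := Rabs_dotv_le P e; have := norm2_ge0 P; nra.
apply: (contraction_of_bound (norm2_ge0 _) (norm2_ge0 _) alpha_gt0 (spec_norm_le_ge0 H23_le) eps_le).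
- by rewrite norm2_sq; have := H1_le d; lra.
- have := Rmult_le_compat_l _ _ _ (Rlt_le _ _ alpha_gt0) proj_le.
  have -> : alpha * (dotv P d - / alpha * dotv P (mulmv H1 d) - / alpha * dotv P e) =
            alpha * dotv P d - dotv P (mulmv H1 d) - dotv P e by field; lra.
  by rewrite norm2_sq; lra.
Qed.
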